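(* Let $G=(U,V,E)$ be a bipartite graph, let $Y \subseteq V$, and let $X \subseteq U$ be such that $X$ is contained in some minimum-cardinality vertex cover of $G \setminus Y$. Then $X$ is contained in some minimum-cardinality vertex cover of $G$.
   Context: $G=(U,V,E)$ denotes a bipartite graph with vertex set $U\cup V$ and every edge having one end in $U$ and the other in $V$. $G\setminus Y$ denotes the graph obtained by deleting the vertices of $Y$. A vertex cover is a set of vertices incident to all edges. *)

From mathcomp Require Import all_boot.
Set Implicit Arguments. Unset Strict Implicit. Unset Printing Implicit Defensive.

(* A bipartite graph G = (U, V, E): the two sides are the finite types U and V
   (disjoint by construction), and E : U -> V -> bool is the edge relation.
   A vertex set of such a graph is represented by a pair (CU, CV) of its
   U-part and V-part; its cardinality is #|CU| + #|CV|.

   More generally we consider the induced subgraph on vertex parts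
   AU : {set U}, AV : {set V}; its edges are the edges u v of G with
   u \in AU and v \in AV.  Then G itself is the case AU = AV = setT and
   G \ Y (for Y a set of V-vertices) is the case AU = setT, AV = ~: Y. *)

Section VC.
Variables (U V : finType) (E : U -> V -> bool).

Definition is_vcover (AU : {set U}) (AV : {set V})
    (CU : {set U}) (CV : {set V}) : Prop :=
  [/\ CU \subset AU, CV \subset AV &
      forall u v, u \in AU -> v \in AV -> E u v -> u \in CU \/ v \in CV].

Definition is_min_vcover (AU : {set U}) (AV : {set V})
    (CU : {set U}) (CV : {set V}) : Prop :=
  is_vcover AU AV CU CV /\
  forall CU' CV', is_vcover AU AV CU' CV' -> #|CU| + #|CV| <= #|CU'| + #|CV'|.

End VC.

From mathcomp Require Import all_boot.
From mathcomp Require Import zify.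

Set Implicit Arguments.
Unset Strict Implicit.
Unset Printing Implicit Defensive.

(* Uncrossing.  Let (AU, AV) be a minimum cover of G \ Y with X \subset AU and
   (CU, CV) a minimum cover of G.  Then (AU :|: CU, (AV :|: Y) :&: CV) covers G
   and (AU :&: CU, (AV :|: CV) :\: Y) covers G \ Y; the two V-parts together
   are no larger than AV and CV together.  Since the second cover is no smaller
   than (AU, AV), the first is no larger than (CU, CV), so it is a minimum
   cover of G, and it contains X. *)

Lemma card_uncross (T : finType) (A B Y : {set T}) :
  #|(A :|: B) :\: Y| + #|(A :|: Y) :&: B| <= #|A| + #|B|.
Proof.
rewrite -cardsUI -[#|A| + _]cardsUI leq_add //; apply/subset_leq_card/subsetP=> x.
  by rewrite !inE; case: (x \in A); case: (x \in B); rewrite ?andbF ?orbT.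
by rewrite !inE; case: (x \in A); case: (x \in B); case: (x \in Y).
Qed.

Section VertexCovers.
Variables (U V : finType) (E : U -> V -> bool).

Lemma exists_min_vcover (AU : {set U}) (AV : {set V}) :
  exists CU CV, is_min_vcover E AU AV CU CV.
Proof.
pose coverb (C : {set U} * {set V}) :=
  [&& C.1 \subset AU, C.2 \subset AV &
      [forall u in AU, forall v in AV, E u v ==> (u \in C.1) || (v \in C.2)]].
have coverbP CU CV : reflect (is_vcover E AU AV CU CV) (coverb (CU, CV)).
  apply: (iffP and3P) => -[sU sV cov]; split=> //.
    move=> u v uA vA Euv; move/forall_inP/(_ u uA)/forall_inP/(_ v vA): cov.
    by rewrite Euv => /orP[]; [left | right].
  apply/forall_inP=> u uA; apply/forall_inP=> v vA; apply/implyP=> Euv.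
  by case: (cov u v uA vA Euv) => ->; rewrite ?orbT.
have coverA : coverb (AU, AV).
  by apply/coverbP; split=> // u v uA _ _; left.
case: (arg_minnP (fun C : {set U} * {set V} => #|C.1| + #|C.2|) coverA) => -[CU CV] /coverbP covC minC.
by exists CU, CV; split=> // CU' CV' /coverbP /minC.
Qed.

Lemma min_vcover_le_card (AU : {set U}) (AV : {set V}) CU CV DU DV :
  is_min_vcover E AU AV CU CV -> is_vcover E AU AV DU DV ->
  #|DU| + #|DV| <= #|CU| + #|CV| -> is_min_vcover E AU AV DU DV.
Proof.
move=> [_ minC] covD leDC; split=> // CU' CV' /minC; exact: leq_trans.
Qed.

Variable Y : {set V}.
Variables (AU CU : {set U}) (AV CV : {set V}).
Hypotheses (covA : is_vcover E [set: U] (~: Y) AU AV)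
           (covC : is_vcover E [set: U] [set: V] CU CV).

Lemma vcover_uncross_setU :
  is_vcover E [set: U] [set: V] (AU :|: CU) ((AV :|: Y) :&: CV).
Proof.
case: covA covC => _ _ coverA [_ _ coverC].
split; rewrite ?subsetT // => u v _ _ Euv; rewrite !inE.
case: (coverC u v (in_setT u) (in_setT v) Euv) => [-> | vC]; first by left; rewrite orbT.
have [_ | vnY] := boolP (v \in Y); first by right; rewrite vC orbT.
have vnY' : v \in ~: Y by rewrite inE.
have [-> | ->] := coverA u v (in_setT u) vnY' Euv; first by left.
by right; rewrite vC.
Qed.

Lemma vcover_uncross_setI :
  is_vcover E [set: U] (~: Y) (AU :&: CU) ((AV :|: CV) :\: Y).
Proof.
case: covA covC => _ _ coverA [_ _ coverC].
split; rewrite ?subsetT ?subsetDr // => u v _ vnY Euv.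
move: (vnY); rewrite !inE => -> /=.
case: (coverC u v (in_setT u) (in_setT v) Euv) => [uC | ->]; last by right; rewrite orbT.
by case: (coverA u v (in_setT u) vnY Euv) => ->; [left; rewrite uC | right].
Qed.

End VertexCovers.

Theorem lemma6 (U V : finType) (E : U -> V -> bool) (Y : {set V}) (X : {set U}) :
  (exists CU CV, is_min_vcover E [set: U] (~: Y) CU CV /\ X \subset CU) ->
  exists CU CV, is_min_vcover E [set: U] [set: V] CU CV /\ X \subset CU.
Proof.
case=> AU [AV [[covA minA] sXA]].
have [CU [CV minC]] := exists_min_vcover E [set: U] [set: V].
have covC := minC.1.
exists (AU :|: CU), ((AV :|: Y) :&: CV); split; last exact: subset_trans sXA (subsetUl _ _).
apply: (min_vcover_le_card minC (vcover_uncross_setU covA covC)).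
have le_A := minA _ _ (vcover_uncross_setI covA covC).
have := card_uncross AV CV Y; have := cardsUI AU CU; lia.
Qed.
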